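(* Let $\mathcal M$ be a rank 3 acyclic oriented matroid with chirotope $\chi:E^3\to\{-1,0,1\}$ on $E=X\sqcup\{\omega\}$, where $\omega$ is not a coloop and is neither parallel nor antiparallel to any other element. Suppose there are distinct positive cocircuits $A,B$ of $\mathcal M$, neither containing $\omega$, such that $\chi(\omega,a,b)=1$ for all $a\in A\setminus B$ and $b\in B\setminus A$. Suppose $\mathcal M$ has a realization, i.e. vectors $\mathbf v_e=(x_e,y_e,z_e)^T\in\mathbb{R}^3$, $e\in E$, with $\chi(e,f,g)=\operatorname{sign}\det(\mathbf v_e,\mathbf v_f,\mathbf v_g)$ for all $e,f,g\in E$. Then a realization $(\mathbf v_e)_{e\in E}$ of $\mathcal M$ can be chosen such that: (1) $\mathbf v_\omega=(0,0,1)^T$; (2) $x_a^2+y_a^2=1$ for all $a\in X$; (3)–(5) there are $\theta_a\in(0,180)$ (degrees) with $x_a=-\cos\theta_a$ and $y_a=-\sin\theta_a$ for each $a\in X$; (6) $z_a>0$ for each $a\in X$; (7) putting $r_a=z_a>0$, for all $a,b,c\in X$ with $\theta_a<\theta_b<\theta_c$ one has $r_a\sin(\theta_c-\theta_b)-r_b\sin(\theta_c-\theta_a)+r_c\sin(\theta_b-\theta_a)=0$, $>0$, or $<0$ according as $\chi(a,b,c)$ is $0$, $1$, or $-1$; (8) $(r_a,\theta_a)_{a\in X}$ are polar coordinates for the realization, i.e. the line with homogeneous coordinates $\mathbf v_a$ is $\{(p,q):p\cos\theta_a+q\sin\theta_a=r_a\}$.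
   Context: Standard oriented matroid terminology (chirotope, acyclic, cocircuit, coloop, parallel elements, realization) is used. Angles are in degrees. *)

From Stdlib Require Import Reals ZArith.
From mathcomp Require Import ssreflect ssrbool eqtype fintype.

Set Implicit Arguments.
Unset Strict Implicit.

Record vec3 := V3 { vx : R; vy : R; vz : R }.

Definition det3 (u v w : vec3) : R :=
  (vx u * (vy v * vz w - vz v * vy w)
 - vx v * (vy u * vz w - vz u * vy w)
 + vx w * (vy u * vz v - vz u * vy v))%R.

Definition sgnR (x : R) : Z :=
  match Rlt_dec 0 x with
  | left _ => 1%Z
  | right _ => match Rlt_dec x 0 with left _ => (-1)%Z | right _ => 0%Z end
  end.

Definition deg (t : R) : R := (t * PI / 180)%R.

Section OM.
Variable E : Type.
Variable chi : E -> E -> E -> Z.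

Definition realizes (v : E -> vec3) : Prop :=
  forall e f g, chi e f g = sgnR (det3 (v e) (v f) (v g)).

Definition is_sign_vector (X : E -> Z) : Prop :=
  forall e, X e = 0%Z \/ X e = 1%Z \/ X e = (-1)%Z.

(* Cocircuits of a rank-3 oriented matroid given by its chirotope:
   C = s * chi(., f, g) for s = +-1 and f, g such that chi(., f, g) <> 0. *)
Definition cocircuit (C : E -> Z) : Prop :=
  exists f g s, (s = 1%Z \/ s = (-1)%Z) /\ (exists e, chi e f g <> 0%Z) /\
    forall e, C e = (s * chi e f g)%Z.

Definition pos_cocircuit (C : E -> Z) : Prop :=
  cocircuit C /\ forall e, (0 <= C e)%Z.

Definition orth (X Y : E -> Z) : Prop :=
  (forall e, (X e * Y e)%Z = 0%Z) \/
  ((exists e, (X e * Y e > 0)%Z) /\ (exists f, (X f * Y f < 0)%Z)).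

(* vectors of the oriented matroid = sign vectors orthogonal to all cocircuits;
   circuits = nonzero vectors of minimal support *)
Definition om_vector (X : E -> Z) : Prop :=
  is_sign_vector X /\ forall D, cocircuit D -> orth X D.

Definition circuit (C : E -> Z) : Prop :=
  om_vector C /\ (exists e, C e <> 0%Z) /\
  forall D, om_vector D -> (exists e, D e <> 0%Z) ->
    (forall e, D e <> 0%Z -> C e <> 0%Z) -> (forall e, C e <> 0%Z -> D e <> 0%Z).

Definition acyclic : Prop :=
  ~ exists C, circuit C /\ forall e, (0 <= C e)%Z.

(* bases = triples with chi <> 0; a coloop lies in every basis *)
Definition coloop (w : E) : Prop :=
  forall a b c, chi a b c <> 0%Z -> w = a \/ w = b \/ w = c.

Definition parallel (e f : E) : Prop :=
  e <> f /\ exists C, circuit C /\ C e = 1%Z /\ C f = (-1)%Z /\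
    forall g, g <> e -> g <> f -> C g = 0%Z.

Definition antiparallel (e f : E) : Prop :=
  e <> f /\ exists C, circuit C /\ C e = 1%Z /\ C f = 1%Z /\
    forall g, g <> e -> g <> f -> C g = 0%Z.

End OM.

(* the line {(p,q) : x p + y q + z = 0} with homogeneous coordinates (x,y,z) *)
Definition on_line (v : vec3) (p q : R) : Prop :=
  (vx v * p + vy v * q + vz v = 0)%R.

From Stdlib Require Import Reals ZArith Lra Lia Psatz Classical FunctionalExtensionality IndefiniteDescription.
From mathcomp Require Import ssreflect ssrbool eqtype fintype seq.
Open Scope R_scope.
Set Implicit Arguments.

(* Every realized cocircuit is the sign pattern of a linear form.  The positive cocircuits
   A and B give forms c_A, c_B that vanish at v_ω and are nonnegative everywhere; their sum
   c_1 is positive at every v_a, a ∈ X, for otherwise v_a and v_ω would both be orthogonal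
   to c_A and c_B, hence proportional (c_A × c_B ≠ 0 because A ≠ B), making a parallel or
   antiparallel to ω.  For small t > 0 the form c_0 = c_1 + t v_ω is still positive on X,
   and the map v ↦ (⟨v_ω × c_1, v⟩, −⟨c_1, v⟩, ⟨c_0, v⟩) has determinant t |v_ω|² |c_1|² > 0,
   so it preserves the chirotope; it sends v_ω onto the positive z-axis and every v_a into
   {y < 0, z > 0}.  Rescaling each vector by a positive factor gives v_ω = e_3 and
   x_a² + y_a² = 1, hence angles θ_a ∈ (0°, 180°), and in these coordinates det(v_a, v_b, v_c)
   is the trigonometric expression of (7). *)

Definition dot (u v : vec3) : R := vx u * vx v + vy u * vy v + vz u * vz v.
Definition cross (u v : vec3) : vec3 :=
  V3 (vy u * vz v - vz u * vy v) (vz u * vx v - vx u * vz v) (vx u * vy v - vy u * vx v).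
Definition scal (k : R) (u : vec3) : vec3 := V3 (k * vx u) (k * vy u) (k * vz u).
Definition addv (u v : vec3) : vec3 := V3 (vx u + vx v) (vy u + vy v) (vz u + vz v).

Definition apply3 (r1 r2 r3 u : vec3) : vec3 := V3 (dot r1 u) (dot r2 u) (dot r3 u).

Lemma dotC u w : dot u w = dot w u.
Proof. unfold dot; ring. Qed.

Lemma dot0l u : dot (V3 0 0 0) u = 0.
Proof. unfold dot; simpl; ring. Qed.

Lemma dotDl c d u : dot (addv c d) u = dot c u + dot d u.
Proof. unfold dot, addv; simpl; ring. Qed.

Lemma dotZl k c u : dot (scal k c) u = k * dot c u.
Proof. unfold dot, scal; simpl; ring. Qed.

Lemma dotZr k c u : dot c (scal k u) = k * dot c u.
Proof. unfold dot, scal; simpl; ring. Qed.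

Lemma dot_cross_self u c : dot (cross u c) u = 0.
Proof. unfold dot, cross; simpl; ring. Qed.

Lemma dot_self_gt0 u : u <> V3 0 0 0 -> 0 < dot u u.
Proof.
  destruct u as [a b c]; unfold dot; simpl; intro Hu.
  destruct (Req_dec a 0), (Req_dec b 0), (Req_dec c 0); subst; try nra.
  now destruct Hu.
Qed.

Lemma scal_eq0 k u : k <> 0 -> scal k u = V3 0 0 0 -> u = V3 0 0 0.
Proof.
  destruct u as [a b c]; unfold scal; simpl; intros Hk H; injection H; intros.
  f_equal; apply (Rmult_eq_reg_l k); lra.
Qed.

Lemma scalA a b u : scal a (scal b u) = scal (a * b) u.
Proof. unfold scal; simpl; f_equal; ring. Qed.

Lemma scal_inj k u w : k <> 0 -> scal k u = scal k w -> u = w.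
Proof.
  destruct u, w; unfold scal; simpl; intros Hk H; injection H; intros.
  f_equal; apply (Rmult_eq_reg_l k); lra.
Qed.

Lemma det3_dot p q r : det3 p q r = dot p (cross q r).
Proof. destruct p, q, r; unfold det3, dot, cross; simpl; ring. Qed.

Lemma det3_same u : det3 u u u = 0.
Proof. destruct u; unfold det3; simpl; ring. Qed.

Lemma det3_scal k1 k2 k3 u1 u2 u3 :
  det3 (scal k1 u1) (scal k2 u2) (scal k3 u3) = k1 * k2 * k3 * det3 u1 u2 u3.
Proof. destruct u1, u2, u3; unfold det3, scal; simpl; ring. Qed.

Lemma det3_apply3 r1 r2 r3 u1 u2 u3 :
  det3 (apply3 r1 r2 r3 u1) (apply3 r1 r2 r3 u2) (apply3 r1 r2 r3 u3) =
  det3 r1 r2 r3 * det3 u1 u2 u3.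
Proof. destruct r1, r2, r3, u1, u2, u3; unfold apply3, det3, dot; simpl; ring. Qed.

Lemma cramer e p q r :
  scal (det3 p q r) e =
  addv (addv (scal (det3 e q r) p) (scal (det3 e r p) q)) (scal (det3 e p q) r).
Proof. destruct e, p, q, r; unfold scal, addv, det3; simpl; f_equal; ring. Qed.

Lemma cross_perp_scal cA cB x : dot cA x = 0 -> dot cB x = 0 ->
  scal (dot (cross cA cB) (cross cA cB)) x = scal (dot x (cross cA cB)) (cross cA cB).
Proof.
  intros HA HB.
  assert (Hid : scal (dot (cross cA cB) (cross cA cB)) x =
    addv (scal (dot x (cross cA cB)) (cross cA cB))
         (addv (scal (dot cB x) (cross (cross cA cB) cA))
               (scal (- dot cA x) (cross (cross cA cB) cB)))).
  { destruct cA, cB, x; unfold scal, addv, dot, cross; simpl; f_equal; ring. }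
  rewrite Hid HA HB; unfold scal, addv; simpl; f_equal; ring.
Qed.

Lemma det3_frame u c t : dot u c = 0 ->
  det3 (cross u c) (scal (-1) c) (addv c (scal t u)) = t * (dot u u * dot c c).
Proof.
  intro Huc.
  transitivity (t * (dot u u * dot c c - dot u c ^ 2)).
  - destruct u, c; unfold det3, dot, cross, scal, addv; simpl; ring.
  - rewrite Huc; ring.
Qed.

Lemma sgnR_cases x :
  (0 < x /\ sgnR x = 1%Z) \/ (x = 0 /\ sgnR x = 0%Z) \/ (x < 0 /\ sgnR x = (-1)%Z).
Proof.
  unfold sgnR; destruct (Rlt_dec 0 x); [left; auto|].
  destruct (Rlt_dec x 0); [right; right; auto|right; left; split; [lra|reflexivity]].
Qed.

Lemma sgnR_gt0 x : 0 < x -> sgnR x = 1%Z.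
Proof. destruct (sgnR_cases x) as [[_ ->]|[[? _]|[? _]]]; intro; [reflexivity|lra|lra]. Qed.

Lemma sgnR_lt0 x : x < 0 -> sgnR x = (-1)%Z.
Proof. destruct (sgnR_cases x) as [[? _]|[[? _]|[_ ->]]]; intro; [lra|lra|reflexivity]. Qed.

Lemma sgnR0 : sgnR 0 = 0%Z.
Proof. destruct (sgnR_cases 0) as [[? _]|[[_ ->]|[? _]]]; [lra|reflexivity|lra]. Qed.

Lemma sgnR_eq0 x : sgnR x = 0%Z -> x = 0.
Proof. destruct (sgnR_cases x) as [[_ ->]|[[? _]|[_ ->]]]; intro; easy. Qed.

Lemma sgnR_eq1 x : sgnR x = 1%Z -> 0 < x.
Proof. destruct (sgnR_cases x) as [[? _]|[[_ ->]|[_ ->]]]; intro; easy. Qed.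

Lemma sgnR_eqN1 x : sgnR x = (-1)%Z -> x < 0.
Proof. destruct (sgnR_cases x) as [[_ ->]|[[_ ->]|[? _]]]; intro; easy. Qed.

Lemma sgnR_ge0 x : (0 <= sgnR x)%Z -> 0 <= x.
Proof. destruct (sgnR_cases x) as [[? _]|[[? _]|[_ ->]]]; intro; lra || lia. Qed.

Lemma sgnR_mul x y : sgnR (x * y) = (sgnR x * sgnR y)%Z.
Proof.
  destruct (sgnR_cases x) as [[Hx ->]|[[Hx ->]|[Hx ->]]];
  destruct (sgnR_cases y) as [[Hy ->]|[[Hy ->]|[Hy ->]]];
  destruct (sgnR_cases (x * y)) as [[H ->]|[[H ->]|[H ->]]];
  try reflexivity; subst; nra.
Qed.

Lemma sgnR_mul_pos k x : 0 < k -> sgnR (k * x) = sgnR x.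
Proof. intro Hk; rewrite sgnR_mul sgnR_gt0 //; lia. Qed.

Section Realization.

Context {E : eqType} (chi : E -> E -> E -> Z) (v : E -> vec3).
Hypothesis Hr : realizes chi v.
Hypothesis Hrank : exists a b c, chi a b c <> 0%Z.
Hypothesis Hacyc : acyclic chi.

Lemma cocircuit_covector D : cocircuit chi D ->
  exists c, (forall e, D e = sgnR (dot c (v e))) /\ (exists e, D e <> 0%Z).
Proof.
  intros [f [g [s [Hs [[e0 He0] HD]]]]].
  split with (scal (IZR s) (cross (v f) (v g))); split; [|exists e0; rewrite HD; lia].
  intro e; rewrite HD Hr dotZl sgnR_mul det3_dot dotC.
  destruct Hs as [-> | ->]; [rewrite (@sgnR_gt0 (IZR 1))|rewrite (@sgnR_lt0 (IZR (-1)))];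
    lia || (simpl; lra).
Qed.

Lemma exists_ne_element (o : E) : exists e, e <> o.
Proof.
  destruct Hrank as [a [b [c Habc]]].
  destruct (eqVneq a o) as [->|Ha]; [|exists a; exact/eqP].
  destruct (eqVneq b o) as [->|Hb]; [|exists b; exact/eqP].
  destruct (eqVneq c o) as [->|Hc]; [|exists c; exact/eqP].
  by exfalso; apply Habc; rewrite Hr det3_same sgnR0.
Qed.

Lemma realized_nonzero (e : E) : v e <> V3 0 0 0.
Proof.
  intro Hz; apply Hacyc.
  exists (fun x => if x == e then 1%Z else 0%Z); split; [split; [split|split]|].
  - intro x; case: (x == e); lia.
  - intros D HD; destruct (cocircuit_covector HD) as [c [Hc _]]; left; intro x.
    destruct (eqVneq x e) as [->|_]; [|lia].
    by rewrite Hc Hz dotC dot0l sgnR0.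
  - by exists e; rewrite eqxx.
  - intros D _ [x Hx] Hsub y; destruct (eqVneq y e) as [->|_]; [intros _|lia].
    destruct (eqVneq x e) as [<-|Hxe]; [exact Hx|].
    by exfalso; apply (Hsub x Hx); rewrite (negbTE Hxe).
  - intro x; case: (x == e); lia.
Qed.

Lemma nonzero_in_basis (e : E) : v e <> V3 0 0 0 -> exists f g, chi e f g <> 0%Z.
Proof.
  intro Hne; destruct Hrank as [p [q [r Hpqr]]].
  destruct (classic (exists f g, chi e f g <> 0%Z)) as [H|Hno]; [exact H|exfalso].
  assert (Hdet0 : forall f g, det3 (v e) (v f) (v g) = 0).
  { intros f g; apply sgnR_eq0; rewrite -Hr.
    destruct (Z.eq_dec (chi e f g) 0) as [h|h]; [exact h|].
    by exfalso; apply Hno; exists f, g. }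
  apply Hne, (@scal_eq0 (det3 (v p) (v q) (v r))).
  - by intro h; apply Hpqr; rewrite Hr h sgnR0.
  - by rewrite cramer !Hdet0; unfold scal, addv; simpl; f_equal; ring.
Qed.

(* For a basis {x, f, g}, the cocircuit χ(·, f, g) and D have a nonzero product at x and
   nowhere else, which violates orthogonality. *)
Lemma vector_support_not_single D x : om_vector chi D ->
  (forall y, D y <> 0%Z -> y = x) -> D x <> 0%Z -> (exists f g, chi x f g <> 0%Z) -> False.
Proof.
  intros [_ HD] Hs Hx [f [g Hfg]].
  assert (Hc : cocircuit chi (fun e => chi e f g)).
  { exists f, g, 1%Z; split; [left; reflexivity|split; [exists x; exact Hfg|intro e; lia]]. }
  destruct (HD _ Hc) as [H|[[e He] [e' He']]]; simpl in *.
  - specialize (H x); nia.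
  - have He1 : e = x by apply Hs; intro Z0; rewrite Z0 in He; lia.
    have He2 : e' = x by apply Hs; intro Z0; rewrite Z0 in He'; lia.
    subst e e'; lia.
Qed.

Lemma pair_circuit w a s : w <> a -> (s = 1 \/ s = -1)%Z ->
  (forall c, sgnR (dot c (v a)) = (- s * sgnR (dot c (v w)))%Z) ->
  (exists f g, chi w f g <> 0%Z) -> (exists f g, chi a f g <> 0%Z) ->
  circuit chi (fun x => if x == w then 1%Z else if x == a then s else 0%Z).
Proof.
  intros Hwa Hs Hrel Hw Ha.
  have Haw : (a == w) = false by apply/eqP; intro; apply Hwa.
  split; [split|split].
  - intro x; case: (x == w); [lia|case: (x == a); lia].
  - intros D HD; destruct (cocircuit_covector HD) as [c [Hc _]].
    destruct (sgnR_cases (dot c (v w))) as [[_ Hsw]|[[_ Hsw]|[_ Hsw]]].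
    + right; split; [exists w; rewrite /= eqxx Hc Hsw; lia|].
      by exists a; rewrite /= Haw eqxx Hc Hrel Hsw; destruct Hs as [-> | ->]; lia.
    + left; intro x; rewrite /=; destruct (eqVneq x w) as [->|Hxw]; [rewrite Hc Hsw; lia|].
      destruct (eqVneq x a) as [->|_]; [rewrite Hc Hrel Hsw; lia|lia].
    + right; split; [|exists w; rewrite /= eqxx Hc Hsw; lia].
      by exists a; rewrite /= Haw eqxx Hc Hrel Hsw; destruct Hs as [-> | ->]; lia.
  - by exists w; rewrite eqxx.
  - intros D HD [x Hx] Hsub.
    have Hsupp_pair : forall z, (if z == w then 1%Z else if z == a then s else 0%Z) <> 0%Z ->
      z = w \/ z = a.
    { intros z; destruct (eqVneq z w) as [-> | _]; [by left|].
      destruct (eqVneq z a) as [-> | _]; [by right|by []]. }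
    have Hsupp : forall z, D z <> 0%Z -> z = w \/ z = a by intros z Hz; apply Hsupp_pair, Hsub.
    have HDw : D w <> 0%Z.
    { intro Hw0; apply (vector_support_not_single HD (x:=a)); [| |exact Ha].
      - by intros z Hz; destruct (Hsupp z Hz) as [-> | ->].
      - by destruct (Hsupp x Hx) as [<- | <-]. }
    have HDa : D a <> 0%Z.
    { intro Ha0; apply (vector_support_not_single HD (x:=w)); [| |exact Hw].
      - by intros z Hz; destruct (Hsupp z Hz) as [-> | ->].
      - by destruct (Hsupp x Hx) as [<- | <-]. }
    intros y Hy; destruct (Hsupp_pair y Hy) as [-> | ->]; assumption.
Qed.

Lemma proportional_parallel_or_antiparallel w a k : w <> a -> k <> 0 ->
  v a = scal k (v w) -> parallel chi w a \/ antiparallel chi w a.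
Proof.
  intros Hwa Hk Hva.
  have Hw := @nonzero_in_basis w (@realized_nonzero w).
  have Ha := @nonzero_in_basis a (@realized_nonzero a).
  have Hrel : forall c, sgnR (dot c (v a)) = (sgnR k * sgnR (dot c (v w)))%Z.
  { by intro c; rewrite Hva dotZr sgnR_mul. }
  have Haw : (a == w) = false by apply/eqP; intro; apply Hwa.
  destruct (Rlt_dec 0 k) as [Hpos|Hneg]; [left|right]; split; auto.
  - exists (fun x => if x == w then 1%Z else if x == a then (-1)%Z else 0%Z).
    split; [apply pair_circuit; auto; intro c; rewrite Hrel sgnR_gt0 //; lia|].
    rewrite eqxx Haw eqxx; repeat split.
    by intros g H1 H2; rewrite (introF eqP H1) (introF eqP H2).
  - exists (fun x => if x == w then 1%Z else if x == a then 1%Z else 0%Z).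
    split; [apply pair_circuit; auto; intro c; rewrite Hrel sgnR_lt0; [lia|lra]|].
    rewrite eqxx Haw eqxx; repeat split.
    by intros g H1 H2; rewrite (introF eqP H1) (introF eqP H2).
Qed.

End Realization.

Lemma orthogonal_pair_proportional cA cB u w :
  cross cA cB <> V3 0 0 0 -> w <> V3 0 0 0 ->
  dot cA u = 0 -> dot cB u = 0 -> dot cA w = 0 -> dot cB w = 0 ->
  exists k, u = scal k w.
Proof.
  intros Hn Hw HAu HBu HAw HBw.
  have Pu := cross_perp_scal HAu HBu.
  have Pw := cross_perp_scal HAw HBw.
  have HN := dot_self_gt0 Hn.
  set (n := cross cA cB) in *; set (N := dot n n) in *.
  have Hbeta : dot w n <> 0.
  { intro H0; apply Hw, (scal_eq0 (k:=N)); [lra|].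
    by rewrite Pw H0; unfold scal; simpl; f_equal; ring. }
  exists (dot u n / dot w n).
  apply (@scal_inj N); [lra|].
  rewrite Pu scalA Rmult_comm -scalA Pw scalA; f_equal; field; exact Hbeta.
Qed.

Lemma nonneg_forms_cross0_same_sign (T : Type) (u : T -> vec3) cA cB e1 :
  cross cA cB = V3 0 0 0 -> cA <> V3 0 0 0 ->
  (forall e, 0 <= dot cA (u e)) -> 0 < dot cB (u e1) ->
  forall e, sgnR (dot cB (u e)) = sgnR (dot cA (u e)).
Proof.
  intros Hx HA Hpos He1.
  have Hid : forall y, dot cA cA * dot cB y = dot cA cB * dot cA y.
  { intro y.
    have : dot cA cA * dot cB y - dot cA cB * dot cA y = dot y (cross (cross cA cB) cA)
      by destruct cA, cB, y; unfold dot, cross; simpl; ring.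
    rewrite Hx; unfold dot, cross; simpl; lra. }
  have HAA := dot_self_gt0 HA.
  have HAB : 0 < dot cA cB by have := Hid (u e1); have := Hpos e1; nra.
  by intro e; rewrite -(sgnR_mul_pos _ HAA) Hid sgnR_mul_pos.
Qed.

Lemma exists_covector_pos_off {E : eqType} (chi : E -> E -> E -> Z) (v : E -> vec3)
    (o : E) (A B : E -> Z) :
  realizes chi v -> (exists a b c, chi a b c <> 0%Z) -> acyclic chi ->
  (forall e, e <> o -> ~ parallel chi o e /\ ~ antiparallel chi o e) ->
  pos_cocircuit chi A -> pos_cocircuit chi B -> A <> B -> A o = 0%Z -> B o = 0%Z ->
  exists c, c <> V3 0 0 0 /\ dot c (v o) = 0 /\ forall e, e <> o -> 0 < dot c (v e).
Proof.
  intros Hr Hrank Hacyc Hpar [HAc HA0] [HBc HB0] HAB HAo HBo.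
  destruct (cocircuit_covector Hr HAc) as [cA [HA [eA HeA]]].
  destruct (cocircuit_covector Hr HBc) as [cB [HB [eB HeB]]].
  have HcA : forall e, 0 <= dot cA (v e) by intro e; apply sgnR_ge0; rewrite -HA.
  have HcB : forall e, 0 <= dot cB (v e) by intro e; apply sgnR_ge0; rewrite -HB.
  have HcAo : dot cA (v o) = 0 by apply sgnR_eq0; rewrite -HA.
  have HcBo : dot cB (v o) = 0 by apply sgnR_eq0; rewrite -HB.
  have Hn : cross cA cB <> V3 0 0 0.
  { intro Hx; apply HAB, functional_extensionality => e; rewrite HA HB; symmetry.
    apply (nonneg_forms_cross0_same_sign v eB Hx) => //.
    - by intro H0; apply HeA; rewrite HA H0 dot0l sgnR0.
    - by destruct (HcB eB) as [h|h] => //; exfalso; apply HeB; rewrite HB -h sgnR0. }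
  have Hpos : forall e, e <> o -> 0 < dot (addv cA cB) (v e).
  { intros e Heo; rewrite dotDl.
    destruct (Rlt_dec 0 (dot cA (v e) + dot cB (v e))) as [h|h]; [exact h|exfalso].
    have HAe : dot cA (v e) = 0 by have := HcA e; have := HcB e; lra.
    have HBe : dot cB (v e) = 0 by have := HcA e; have := HcB e; lra.
    have [k Hk] := orthogonal_pair_proportional Hn (realized_nonzero Hr Hacyc o)
      HAe HBe HcAo HcBo.
    have Hk0 : k <> 0.
    { intro Hk0; apply (realized_nonzero Hr Hacyc e).
      by rewrite Hk Hk0; unfold scal; f_equal; ring. }
    destruct (Hpar e Heo) as [Hp Ha].
    by destruct (proportional_parallel_or_antiparallel Hr Hrank Hacyc (not_eq_sym Heo) Hk0 Hk). }
  have [e1 He1] := exists_ne_element Hr Hrank o.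
  exists (addv cA cB); split; [|split; [by rewrite dotDl HcAo HcBo; ring|exact Hpos]].
  by intro H0; have := Hpos e1 He1; rewrite H0 dot0l; lra.
Qed.

Lemma realizes_apply3 (E : Type) (chi : E -> E -> E -> Z) v r1 r2 r3 :
  realizes chi v -> 0 < det3 r1 r2 r3 -> realizes chi (fun e => apply3 r1 r2 r3 (v e)).
Proof. by intros Hr Hdet e f g; rewrite det3_apply3 sgnR_mul_pos. Qed.

Lemma realizes_scal (E : Type) (chi : E -> E -> E -> Z) v (k : E -> R) :
  realizes chi v -> (forall e, 0 < k e) -> realizes chi (fun e => scal (k e) (v e)).
Proof.
  intros Hr Hk e f g; rewrite det3_scal sgnR_mul_pos //.
  have := Hk e; have := Hk f; have := Hk g; intros; repeat apply Rmult_lt_0_compat; lra.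
Qed.

Lemma pos_add_mul_le p q t t0 :
  0 < p -> 0 < p + t0 * q -> 0 < t <= t0 -> 0 < p + t * q.
Proof. intros; nra. Qed.

Lemma pos_add_mul_small p q t :
  0 < p -> 0 < t -> t * (Rabs q + 1) <= p -> 0 < p + t * q.
Proof.
  intros Hp Ht Htq; have := Rle_abs (- q); rewrite Rabs_Ropp; nra.
Qed.

Lemma exists_pos_perturbation {T : eqType} (p q : T -> R) (s : seq T) :
  (forall a, 0 < p a) -> exists t, 0 < t /\ forall a, a \in s -> 0 < p a + t * q a.
Proof.
  intro Hp; elim: s => [|b s [t0 [Ht0 IH]]]; [by exists 1; split; [lra|]|].
  have Hq : 0 < Rabs (q b) + 1 by have := Rabs_pos (q b); lra.
  have Hb : 0 < p b / (Rabs (q b) + 1) by apply Rdiv_lt_0_compat; [apply Hp|lra].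
  exists (Rmin t0 (p b / (Rabs (q b) + 1))); split; [by apply Rmin_glb_lt|].
  move=> a; rewrite in_cons => /orP [/eqP -> | Ha].
  - apply pos_add_mul_small; [apply Hp|by apply Rmin_glb_lt|].
    apply (Rmult_le_reg_r (/ (Rabs (q b) + 1))); [by apply Rinv_0_lt_compat|].
    rewrite Rmult_assoc Rinv_r; [|lra]; rewrite Rmult_1_r; apply Rmin_r.
  - apply (pos_add_mul_le (t0 := t0)); [apply Hp|exact: IH|].
    by split; [apply Rmin_glb_lt|apply Rmin_l].
Qed.

Lemma exists_frame {X : finType} (chi : option X -> option X -> option X -> Z) v c :
  realizes chi v -> v None <> V3 0 0 0 -> c <> V3 0 0 0 ->
  dot c (v None) = 0 -> (forall a, 0 < dot c (v (Some a))) ->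
  exists w, realizes chi w /\ vx (w None) = 0 /\ vy (w None) = 0 /\ 0 < vz (w None) /\
    forall a, vy (w (Some a)) < 0 /\ 0 < vz (w (Some a)).
Proof.
  intros Hr Hu Hc Hcu Hca.
  have [t [Ht Hta]] := exists_pos_perturbation
    (fun a => dot c (v (Some a))) (fun a => dot (v None) (v (Some a))) (enum X) Hca.
  have Huu := dot_self_gt0 Hu; have Hcc := dot_self_gt0 Hc.
  exists (fun e => apply3 (cross (v None) c) (scal (-1) c) (addv c (scal t (v None))) (v e)).
  split; [|split; [|split; [|split]]]; rewrite /apply3 /=.
  - apply realizes_apply3 => //; rewrite det3_frame; [|by rewrite dotC].
    by repeat apply Rmult_lt_0_compat.
  - exact: dot_cross_self.
  - by rewrite dotZl Hcu; ring.
  - by rewrite dotDl dotZl Hcu; nra.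
  - intro a; rewrite dotZl dotDl dotZl; have := Hca a; split; [lra|].
    by apply Hta; rewrite mem_enum.
Qed.

Lemma normalize_frame {X : Type} (chi : option X -> option X -> option X -> Z) w :
  realizes chi w -> vx (w None) = 0 -> vy (w None) = 0 -> 0 < vz (w None) ->
  (forall a, vy (w (Some a)) < 0 /\ 0 < vz (w (Some a))) ->
  exists w', realizes chi w' /\ w' None = V3 0 0 1 /\
    forall a, vx (w' (Some a)) ^ 2 + vy (w' (Some a)) ^ 2 = 1 /\
              vy (w' (Some a)) < 0 /\ 0 < vz (w' (Some a)).
Proof.
  intros Hr Hx Hy Hz Ha.
  pose rho a := sqrt (vx (w (Some a)) ^ 2 + vy (w (Some a)) ^ 2).
  have Hrho2 : forall a, rho a * rho a = vx (w (Some a)) ^ 2 + vy (w (Some a)) ^ 2.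
  { by intro a; apply sqrt_sqrt; have := Ha a; nra. }
  have Hrho : forall a, 0 < rho a by intro a; apply sqrt_lt_R0; have := Ha a; nra.
  pose k e := match e with None => / vz (w None) | Some a => / rho a end.
  have Hk : forall e, 0 < k e by case => [a|]; apply Rinv_0_lt_compat.
  exists (fun e => scal (k e) (w e)); split; [exact: realizes_scal|split].
  - by rewrite /scal /= Hx Hy; f_equal; [ring|ring|field; lra].
  - intro a; have := Hk (Some a); have := Ha a; rewrite /scal /=; intros [Hya Hza] Hka.
    split; [|split; nra].
    transitivity ((vx (w (Some a)) ^ 2 + vy (w (Some a)) ^ 2) / (rho a * rho a)).
    + by field; have := Hrho a; lra.
    + by rewrite -Hrho2; field; have := Hrho a; lra.
Qed.

Lemma polar_angle x y : x ^ 2 + y ^ 2 = 1 -> y < 0 ->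
  exists th, 0 < th < 180 /\ x = - cos (deg th) /\ y = - sin (deg th).
Proof.
  intros Hxy Hy.
  have Hb : -1 < - x < 1 by nra.
  have [Hacos0 HacosPI] := acos_bound_lt (- x) Hb.
  have HPI := PI_RGT_0.
  exists (acos (- x) * 180 / PI).
  have -> : deg (acos (- x) * 180 / PI) = acos (- x) by unfold deg; field; lra.
  split; [split|split].
  - apply Rdiv_lt_0_compat; lra.
  - apply (Rmult_lt_reg_r PI); [lra|]; unfold Rdiv; rewrite Rmult_assoc Rinv_l; lra.
  - rewrite cos_acos; lra.
  - rewrite sin_acos; [|lra].
    replace (1 - (- x)²) with (Rsqr y) by (unfold Rsqr; nra).
    rewrite sqrt_Rsqr_abs Rabs_left; lra.
Qed.

Lemma deg_sub a b : deg (a - b) = deg a - deg b.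
Proof. unfold deg; field. Qed.

Lemma det3_polar {P Q S : vec3} {a b c : R} :
  vx P = - cos a -> vy P = - sin a -> vx Q = - cos b -> vy Q = - sin b ->
  vx S = - cos c -> vy S = - sin c ->
  det3 P Q S = vz P * sin (c - b) - vz Q * sin (c - a) + vz S * sin (b - a).
Proof.
  intros xP yP xQ yQ xS yS; rewrite !sin_minus; unfold det3.
  rewrite xP yP xQ yQ xS yS; ring.
Qed.

Theorem lemmal (X : finType) (chi : option X -> option X -> option X -> Z)
  (Hval : forall e f g, chi e f g = 0%Z \/ chi e f g = 1%Z \/ chi e f g = (-1)%Z)
  (Hrank : exists a b c, chi a b c <> 0%Z)
  (Hacyc : acyclic chi)
  (Hcol : ~ coloop chi None)
  (Hpar : forall f, f <> None -> ~ parallel chi None f /\ ~ antiparallel chi None f)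
  (A B : option X -> Z)
  (HA : pos_cocircuit chi A) (HB : pos_cocircuit chi B) (HAB : A <> B)
  (HAw : A None = 0%Z) (HBw : B None = 0%Z)
  (Hchi : forall a b, A a <> 0%Z -> B a = 0%Z -> B b <> 0%Z -> A b = 0%Z ->
            chi None a b = 1%Z)
  (Hreal : exists v, realizes chi v) :
  exists (v : option X -> vec3) (theta : X -> R),
    realizes chi v /\
    v None = V3 0 0 1 /\
    (forall a, (vx (v (Some a)) ^ 2 + vy (v (Some a)) ^ 2 = 1)%R) /\
    (forall a, (0 < theta a < 180)%R /\
               vx (v (Some a)) = (- cos (deg (theta a)))%R /\
               vy (v (Some a)) = (- sin (deg (theta a)))%R) /\
    (forall a, (0 < vz (v (Some a)))%R) /\
    (forall a b c, (theta a < theta b < theta c)%R ->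
       let r := fun x => vz (v (Some x)) in
       let S := (r a * sin (deg (theta c - theta b))
               - r b * sin (deg (theta c - theta a))
               + r c * sin (deg (theta b - theta a)))%R in
       (chi (Some a) (Some b) (Some c) = 0%Z -> S = 0%R) /\
       (chi (Some a) (Some b) (Some c) = 1%Z -> (S > 0)%R) /\
       (chi (Some a) (Some b) (Some c) = (-1)%Z -> (S < 0)%R)) /\
    (forall a p q, on_line (v (Some a)) p q <->
       (p * cos (deg (theta a)) + q * sin (deg (theta a)) = vz (v (Some a)))%R).
Proof.
  destruct Hreal as [v Hr].
  have [c [Hc [Hco Hcpos]]] :=
    exists_covector_pos_off Hr Hrank Hacyc Hpar HA HB HAB HAw HBw.
  have [w0 [Hr0 [Hx0 [Hy0 [Hz0 Ha0]]]]] := exists_frame Hr (realized_nonzero Hr Hacyc None)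
    Hc Hco (fun a => Hcpos (Some a) ltac:(discriminate)).
  have [w [Hw [Hwo Hwa]]] := normalize_frame Hr0 Hx0 Hy0 Hz0 Ha0.
  have Hangle : forall a, exists th, 0 < th < 180 /\
      vx (w (Some a)) = - cos (deg th) /\ vy (w (Some a)) = - sin (deg th).
  { by intro a; have [Hunit [Hneg _]] := Hwa a; apply polar_angle. }
  have [theta Htheta] := functional_choice _ Hangle.
  exists w, theta; do 5 (split; [first [exact Hw | exact Hwo | exact Htheta | apply Hwa] |]).
  split.
  - intros a b c' _ r S.
    have -> : S = det3 (w (Some a)) (w (Some b)) (w (Some c')).
    { have [_ [xa ya]] := Htheta a; have [_ [xb yb]] := Htheta b; have [_ [xc yc]] := Htheta c'.
      by rewrite /S /r !deg_sub (det3_polar xa ya xb yb xc yc). }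
    rewrite Hw; split; [exact: sgnR_eq0|split; [exact: sgnR_eq1|exact: sgnR_eqN1]].
  - intros a p q; have [_ [xa ya]] := Htheta a; rewrite /on_line xa ya; split; lra.
Qed.
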